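(* Let $\Sigma$ be a finite reduct of the label cover signature, $\mathbf P^\Sigma$ the $\Sigma$-reduct of the label cover template $\mathbf P$, and $\mathbf B$ a structure. If $\gamma$ is a gadget from $\Sigma$-structures to structures of the signature of $\mathbf B$ such that $\gamma(\mathbf P^\Sigma)\to\mathbf B$, then $\gamma(\mathbf S)\to\pi_{\mathbf B}(\mathbf S)$ for every $\Sigma$-structure $\mathbf S$.
   Context: Structures. A (multisorted relational) signature consists of types and relation symbols, each symbol $R$ having an arity $\mathrm{ar}_R$, a tuple of types. A structure $\mathbf A$ consists of a set $A_t$ per type and relations $R^{\mathbf A}\subseteq A_{\mathrm{ar}_R(1)}\times\dots\times A_{\mathrm{ar}_R(k)}$. A homomorphism is a type-preserving family of maps preserving all relations; write $\mathbf A\to\mathbf B$. For a finite set $X$, $\mathbf B^X$ has domains $B_t^X$ (maps $X\to B_t$) and $(b_1,\dots,b_m)\in R^{\mathbf B^X}$ iff $(b_1(i),\dots,b_m(i))\in R^{\mathbf B}$ for all $i\in X$. Label cover. The label cover signature has a type $X$ for each finite set $X$ and a binary symbol $E_\pi$ of arity $(X,Y)$ for each map $\pi\colon X\to Y$. The label cover template $\mathbf P$ has domain $P_X=X$ for each type $X$ and $E_\pi^{\mathbf P}=\{(x,\pi(x))\mid x\in X\}$. A finite reduct $\Sigma$ consists of finitely many of these types and finitely many of these symbols (with their types); the $\Sigma$-reduct of a structure keeps only the domains and relations named in $\Sigma$. Gadgets. A gadget $\gamma$ from $\Pi$- to $\Sigma'$-structures consists of a $\Sigma'$-structure $\mathbf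 D_t^\gamma$ for each $\Pi$-type $t$, a $\Sigma'$-structure $\mathbf R^\gamma$ for each $\Pi$-symbol $R$, and homomorphisms $p_{R,i}^\gamma\colon\mathbf D^\gamma_{\mathrm{ar}_R(i)}\to\mathbf R^\gamma$ for $i\in[k]$, $k$ the arity of $R$. $\gamma(\mathbf A)$: take a copy of $\mathbf D^\gamma_t$ for each $a\in A_t$ (elements $(a;d)$) and a copy of $\mathbf R^\gamma$ for each $a\in R^{\mathbf A}$ (elements $(a;e)$); identify $(a;p^\gamma_{R,i}(e))$ with $(a_i;e)$ for all $a\in R^{\mathbf A}$, $i$, $e$; output the quotient by the generated equivalence relation with relations the images. Universal gadget. For a structure $\mathbf B$ and a structure $\mathbf S$ in (a reduct of) the label cover signature, $\pi_{\mathbf B}(\mathbf S)$ is obtained by taking a copy of $\mathbf B^X$ for each element $s$ of type $X$ (elements $(s;b)$, $b\colon X\to B_t$), identifying $(s;b\circ\sigma)$ with $(t;b)$ for each $(s,t)\in E_\sigma^{\mathbf S}$ with $\sigma\colon X\to Y$ and each $b\colon Y\to B_u$, and taking the quotient by the generated equivalence relation, with relations the images of those of the copies. *)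

From Stdlib Require Import Relation_Operators.
From HB Require Import structures.
From mathcomp Require Import all_boot.


Record signature := Signature {
  sort : Type;
  sym : Type;
  arity : sym -> nat;
  ar : forall R : sym, 'I_(arity R) -> sort }.
Arguments ar {s} R i.
Arguments arity {s} R.

Definition tuple_of {s : signature} (dom : sort s -> Type) (R : sym s) :=
  forall i : 'I_(arity R), dom (ar R i).

Record str (s : signature) := mkStr {
  dom : sort s -> Type;
  rel : forall R : sym s, tuple_of dom R -> Prop }.
Arguments dom {s} _ _.
Arguments rel {s} _ R _.
Arguments mkStr {s} _ _.

Definition is_hom {s : signature} (A B : str s)
    (f : forall t, dom A t -> dom B t) : Prop :=
  forall (R : sym s) (a : tuple_of (dom A) R),
    rel A R a -> rel B R (fun i => f _ (a i)).

Definition homto {s : signature} (A B : str s) : Prop :=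
  exists f, is_hom A B f.

Definition pow_str {s : signature} (B : str s) (X : Type) : str s :=
  @mkStr s (fun u => X -> dom B u)
    (fun R b => forall x : X, rel B R (fun i => b i x)).

Definition sum_str {s : signature} {K : Type} (F : K -> str s) : str s :=
  @mkStr s (fun u => {k : K & dom (F k) u})
    (fun R x => exists (k : K) (y : tuple_of (dom (F k)) R),
        rel (F k) R y /\
        forall i, x i = existT (fun k => dom (F k) (ar R i)) k (y i)).

Definition eqcls {T : Type} (gen : T -> T -> Prop) (x : T) : T -> Prop :=
  fun y => clos_refl_sym_trans T gen x y.

Definition quot_str {s : signature} {A : str s}
    (gen : forall u, dom A u -> dom A u -> Prop) : str s :=
  @mkStr s (fun u => {P : dom A u -> Prop | exists x, P = eqcls (gen u) x})
    (fun R c => exists a : tuple_of (dom A) R,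
        rel A R a /\ forall i, proj1_sig (c i) = eqcls (gen _) (a i)).

Record gadget (s1 s2 : signature) := mkGadget {
  gD : sort s1 -> str s2;
  gR : sym s1 -> str s2;
  gp : forall (R : sym s1) (i : 'I_(arity R)) u,
         dom (gD (ar R i)) u -> dom (gR R) u;
  gp_hom : forall (R : sym s1) (i : 'I_(arity R)),
         is_hom (gD (ar R i)) (gR R) (gp R i) }.
Arguments gD {s1 s2} g t.
Arguments gR {s1 s2} g R.
Arguments gp {s1 s2} g R i u _.

(* indices of copies in gamma(A): one per element a of A_t, one per tuple
   a in R^A *)
Definition gad_index {s1 : signature} (A : str s1) : Type :=
  ({t : sort s1 & dom A t} +
   {R : sym s1 & {a : tuple_of (dom A) R | rel A R a}})%type.

Definition gad_copy {s1 s2 : signature} (g : gadget s1 s2) (A : str s1)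
    (k : gad_index A) : str s2 :=
  match k with
  | inl x => gD g (projT1 x)
  | inr y => gR g (projT1 y)
  end.

(* identify (a; p_{R,i}(e)) with (a_i; e) *)
Definition gad_gen {s1 s2 : signature} (g : gadget s1 s2) (A : str s1) u
    (x y : dom (sum_str (gad_copy g A)) u) : Prop :=
  exists (R : sym s1) (a : {a : tuple_of (dom A) R | rel A R a})
         (i : 'I_(arity R)) (e : dom (gD g (ar R i)) u),
    x = existT (fun k => dom (gad_copy g A k) u)
          (inr (existT _ R a)) (gp g R i u e) /\
    y = existT (fun k => dom (gad_copy g A k) u)
          (inl (existT _ (ar R i) (proj1_sig a i))) e.

Definition gad_apply {s1 s2 : signature} (g : gadget s1 s2) (A : str s1)
    : str s2 :=
  quot_str (gad_gen g A).

(* finitely many types (indexed by lcI, the type with index i being the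
   finite set lcX i) and finitely many symbols E_pi (indexed by lcJ, symbol j
   being E_{lc_map j} of arity (lcX (lc_src j), lcX (lc_tgt j))). *)
Record lc_reduct := mkLC {
  lcI : finType;
  lcJ : finType;
  lcX : lcI -> finType;
  lc_src : lcJ -> lcI;
  lc_tgt : lcJ -> lcI;
  lc_map : forall j : lcJ, lcX (lc_src j) -> lcX (lc_tgt j) }.
Arguments lcX {_} i.
Arguments lc_src {_} j.
Arguments lc_tgt {_} j.
Arguments lc_map {_} j _.

Definition lc_ar {Sg : lc_reduct} (j : lcJ Sg) (i : 'I_2) : lcI Sg :=
  if val i == 0 then lc_src j else lc_tgt j.

Definition lc_sig (Sg : lc_reduct) : signature :=
  @Signature (lcI Sg) (lcJ Sg) (fun _ => 2) (@lc_ar Sg).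

Definition fst_of {Sg : lc_reduct} {D : lcI Sg -> Type} {j : lcJ Sg}
    (a : @tuple_of (lc_sig Sg) D j) : D (lc_src j) := a ord0.

Definition snd_of {Sg : lc_reduct} {D : lcI Sg -> Type} {j : lcJ Sg}
    (a : @tuple_of (lc_sig Sg) D j) : D (lc_tgt j) := a ord_max.

Definition lc_template (Sg : lc_reduct) : str (lc_sig Sg) :=
  @mkStr (lc_sig Sg) (fun i => (lcX i : Type))
    (fun j a => lc_map j (fst_of a) = snd_of a).

Definition piB_copy {sB : signature} (B : str sB) {Sg : lc_reduct}
    (S : str (lc_sig Sg)) (k : {i : lcI Sg & dom S i}) : str sB :=
  pow_str B (lcX (projT1 k)).

(* identify (s; b o sigma) with (t; b) for (s,t) in E_sigma^S *)
Definition piB_gen {sB : signature} (B : str sB) {Sg : lc_reduct}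
    (S : str (lc_sig Sg)) u (x y : dom (sum_str (piB_copy B S)) u) : Prop :=
  exists (j : lcJ Sg) (a : @tuple_of (lc_sig Sg) (dom S) j)
         (b : lcX (lc_tgt j) -> dom B u),
    rel S j a /\
    x = existT (fun k => dom (piB_copy B S k) u)
          (existT (fun i => dom S i) (lc_src j) (fst_of a))
          (fun z => b (lc_map j z)) /\
    y = existT (fun k => dom (piB_copy B S k) u)
          (existT (fun i => dom S i) (lc_tgt j) (snd_of a)) b.

Definition piB {sB : signature} (B : str sB) {Sg : lc_reduct}
    (S : str (lc_sig Sg)) : str sB :=
  quot_str (piB_gen B S).

From HB Require Import structures.
From mathcomp Require Import all_boot.
From Stdlib Require Import Relation_Operators ProofIrrelevance
  FunctionalExtensionality PropExtensionality ClassicalEpsilon.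
(* Imported last so that [rel] and [tuple_of] denote the structure notions. *)

(* Fix a homomorphism h : gamma(P) -> B and a Sigma-structure S.
   Both gamma(S) and pi_B(S) are quotients of disjoint unions of copies, so it
   suffices to give a homomorphism between the disjoint unions that maps
   generating identifications into the generated equivalence (quot_hom).
   A copy of D_t indexed by s in S_t is sent into the copy of B^(X_t) indexed
   by s, via d |-> (z |-> h[(z; d)]); a copy of R_sigma indexed by
   (s, t) in E_sigma^S is sent into the copy of B^X indexed by s, via
   e |-> (z |-> h[((z, sigma z); e)]).  Each of these maps is a homomorphism
   (pow_hom, copy_hom), hence so is their sum (sum_hom); the gadget
   identification for the first coordinate of (s, t) becomes an equality, and
   the one for the second coordinate becomes exactly the identification of
   pi_B(S) along E_sigma (glue_map_resp). *)

Definition cls {T : Type} (gen : T -> T -> Prop) (x : T)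
  : {Q : T -> Prop | exists y, Q = eqcls gen y} :=
  exist _ (eqcls gen x) (ex_intro _ x erefl).

Lemma eqcls_eq {T : Type} (gen : T -> T -> Prop) x y :
  clos_refl_sym_trans T gen x y -> eqcls gen x = eqcls gen y.
Proof.
move=> Hxy; apply: functional_extensionality => z.
apply: propositional_extensionality; split => Hz.
- exact: rst_trans (rst_sym _ _ _ _ Hxy) Hz.
- exact: rst_trans Hxy Hz.
Qed.

Lemma cls_eq {T : Type} (gen : T -> T -> Prop) x y :
  clos_refl_sym_trans T gen x y -> cls gen x = cls gen y.
Proof. by move=> Hxy; apply: subset_eq_compat; apply: eqcls_eq. Qed.

Lemma comp_hom {s : signature} (A B C : str s)
    (f : forall u, dom A u -> dom B u) (g : forall u, dom B u -> dom C u) :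
  is_hom A B f -> is_hom B C g -> is_hom A C (fun u a => g u (f u a)).
Proof. by move=> hf hg R a /hf /hg. Qed.

Lemma pow_hom {s : signature} {A B : str s} {X : Type}
    (f : X -> forall u, dom A u -> dom B u) :
  (forall x, is_hom A B (f x)) ->
  is_hom A (pow_str B X) (fun u a x => f x u a).
Proof. by move=> hf R a Ha x; apply: hf. Qed.

Lemma inj_hom {s : signature} {K : Type} (F : K -> str s) (k : K) :
  is_hom (F k) (sum_str F) (fun u d => existT (fun k => dom (F k) u) k d).
Proof. by move=> R a Ha; exists k, a. Qed.

Lemma cls_hom {s : signature} (A : str s)
    (gen : forall u, dom A u -> dom A u -> Prop) :
  is_hom A (quot_str gen) (fun u a => cls (gen u) a).
Proof. by move=> R a Ha; exists a. Qed.

Definition sum_map {s : signature} {K K' : Type} (F : K -> str s)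
    (G : K' -> str s) (kappa : K -> K')
    (f : forall k u, dom (F k) u -> dom (G (kappa k)) u) u
    (x : dom (sum_str F) u) : dom (sum_str G) u :=
  existT (fun k' => dom (G k') u) (kappa (projT1 x)) (f _ u (projT2 x)).

Lemma sum_hom {s : signature} {K K' : Type} {F : K -> str s}
    {G : K' -> str s} {kappa : K -> K'}
    {f : forall k u, dom (F k) u -> dom (G (kappa k)) u} :
  (forall k, is_hom (F k) (G (kappa k)) (f k)) ->
  is_hom (sum_str F) (sum_str G) (sum_map F G kappa f).
Proof.
move=> hf R x [k [y [Hy Hx]]].
exists (kappa k), (fun i => f k _ (y i)); split; first exact: hf.
by move=> i; rewrite /sum_map Hx.
Qed.

Lemma rst_map {T T' : Type} {gen : T -> T -> Prop} {gen' : T' -> T' -> Prop}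
    {F : T -> T'} :
  (forall x y, gen x y -> clos_refl_sym_trans _ gen' (F x) (F y)) ->
  forall x y, clos_refl_sym_trans _ gen x y ->
    clos_refl_sym_trans _ gen' (F x) (F y).
Proof.
move=> resp x y; elim=> {x y}.
- by move=> x y /resp.
- by move=> x; apply: rst_refl.
- by move=> x y _ Hyx; apply: rst_sym.
- by move=> x y z _ Hxy _ Hyz; apply: rst_trans Hxy Hyz.
Qed.

Lemma quot_hom {s : signature} {A C : str s}
    {gA : forall u, dom A u -> dom A u -> Prop}
    {gC : forall u, dom C u -> dom C u -> Prop}
    (F : forall u, dom A u -> dom C u) :
  is_hom A C F ->
  (forall u x y, gA u x y -> clos_refl_sym_trans _ (gC u) (F u x) (F u y)) ->
  homto (quot_str gA) (quot_str gC).
Proof.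
move=> hF resp.
pose repr u (Q : dom (quot_str gA) u) :=
  proj1_sig (constructive_indefinite_description _ (proj2_sig Q)).
have repr_cls u Q : proj1_sig Q = eqcls (gA u) (repr u Q).
  by rewrite /repr; case: constructive_indefinite_description.
exists (fun u Q => cls (gC u) (F u (repr u Q))).
move=> R c [a [Ha Hc]]; exists (fun i => F _ (a i)); split; first exact: hF.
move=> i /=; apply: eqcls_eq; apply: (rst_map (resp _)); apply: rst_sym.
change (eqcls (gA _) (a i) (repr _ (c i))).
by rewrite -Hc repr_cls; apply: rst_refl.
Qed.

Section UniversalGadget.
Context {Sg : lc_reduct} {sB : signature} {B : str sB}
  {g : gadget (lc_sig Sg) sB}.
Let P := lc_template Sg.

Definition tmpl_edge (j : lcJ Sg) (z : lcX (lc_src j))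
  : @tuple_of (lc_sig Sg) (dom P) j :=
  fun i => match (val i == 0) as b return lcX (if b then lc_src j else lc_tgt j)
           with true => z | false => lc_map j z end.

Lemma tmpl_edgeP j z : rel P j (tmpl_edge j z).
Proof. by []. Qed.

Variable h : forall t, dom (gad_apply g P) t -> dom B t.
Hypothesis h_hom : is_hom (gad_apply g P) B h.

Definition hP u (k : gad_index P) (d : dom (gad_copy g P k) u) : dom B u :=
  h u (cls (gad_gen g P u) (existT (fun k => dom (gad_copy g P k) u) k d)).

Lemma hP_hom (k : gad_index P) : is_hom (gad_copy g P k) B (fun u => hP u k).
Proof.
apply: comp_hom h_hom; apply: comp_hom (cls_hom _ _).
exact: inj_hom.
Qed.

Lemma hP_glue u (j : lcJ Sg) (a : {a | rel P j a}) (i : 'I_2)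
    (e : dom (gD g (lc_ar j i)) u) :
  hP u (inr (existT _ j a)) (gp g j i u e)
  = hP u (inl (existT _ (lc_ar j i) (proj1_sig a i))) e.
Proof.
congr (h u); apply: cls_eq; apply: rst_step.
by exists j, a, i, e.
Qed.

Variable S : str (lc_sig Sg).

(* The copy of B^X in pi_B(S) receiving each copy of gamma(S): the copy of
   D_t at s goes to s, the copy of R_j at (s, t) goes to s. *)
Definition copy_index (k : gad_index S) : {i : lcI Sg & dom S i} :=
  match k with
  | inl x => x
  | inr (existT j a) => existT _ (lc_src j) (fst_of (proj1_sig a))
  end.

Definition copy_map (k : gad_index S) :
    forall u, dom (gad_copy g S k) u -> dom (piB_copy B S (copy_index k)) u :=
  match k with
  | inl (existT t s) => fun u d z => hP u (inl (existT _ t z)) d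
  | inr (existT j a) => fun u e z =>
      hP u (inr (existT _ j (exist _ (tmpl_edge j z) (tmpl_edgeP j z)))) e
  end.

Lemma copy_hom (k : gad_index S) :
  is_hom (gad_copy g S k) (piB_copy B S (copy_index k)) (copy_map k).
Proof.
case: k => [[t s]|[j a]]; apply: pow_hom => z.
- exact: (hP_hom (inl (existT _ t z))).
- exact: (hP_hom (inr (existT _ j (exist _ (tmpl_edge j z) (tmpl_edgeP j z))))).
Qed.

Definition glue_map :=
  sum_map (gad_copy g S) (piB_copy B S) copy_index copy_map.

(* The identification for the source of an edge becomes an equality, the one
   for the target becomes an identification of pi_B(S). *)
Lemma glue_map_resp u x y : gad_gen g S u x y ->
  clos_refl_sym_trans _ (piB_gen B S u) (glue_map u x) (glue_map u y).
Proof.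
move=> [j [[a Ha] [i [e [-> ->]]]]].
rewrite /glue_map /sum_map /=.
case: i e => [[|[|n]] Hi] //= e.
- have -> /= := eq_irrelevance Hi (ltn0Sn 1).
  set X := existT _ _ _; set Y := existT _ _ _.
  suff -> : X = Y by apply: rst_refl.
  congr existT; apply: functional_extensionality => z.
  exact: hP_glue.
- have -> /= := eq_irrelevance Hi (ltnSn 1); apply: rst_step.
  exists j, a, (fun z => hP u (inl (existT _ (lc_tgt j) z)) e).
  split=> //; split=> //.
  congr existT; apply: functional_extensionality => z.
  exact: hP_glue.
Qed.

End UniversalGadget.

Theorem mainTheorem16 (Sg : lc_reduct) (sB : signature) (B : str sB)
    (g : gadget (lc_sig Sg) sB) :
  homto (gad_apply g (lc_template Sg)) B ->
  forall S : str (lc_sig Sg), homto (gad_apply g S) (piB B S).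
Proof.
move=> [h h_hom] S.
apply: (quot_hom (glue_map h S)).
- exact: (sum_hom (copy_hom h h_hom S)).
- exact: glue_map_resp.
Qed.
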